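(* Assume $\kappa\ge\|f'\|_{C[-\beta,\beta]}$, $\|\phi^0\|_\infty\le\beta$ and $\tau_1<(\kappa m\Gamma(2-\alpha))^{-1/\alpha}$. Then the $L1$-sESAV scheme is energy-stable for arbitrary time steps $\tau_n$, $n\ge2$: $\mathcal E_h[\phi^n,R^n]\le\mathcal E_h[\phi^0,R^0]$ for all $n\ge1$.
   Context: Setting: $\Omega=(0,L)^2$ with periodic boundary conditions; constants $m>0$, $\varepsilon>0$, $\alpha\in(0,1)$. The nonlinearity $f=-F'$ is one of: (double-well) $F(\phi)=\frac14(1-\phi^2)^2$, $f(\phi)=\phi-\phi^3$, with $\beta=1$; or (Flory–Huggins) $F(\phi)=\frac{\theta}{2}[(1+\phi)\ln(1+\phi)+(1-\phi)\ln(1-\phi)]-\frac{\theta_c}{2}\phi^2$, $f(\phi)=\frac{\theta}{2}\ln\frac{1-\phi}{1+\phi}+\theta_c\phi$ on $(-1,1)$, with $\theta_c>\theta>0$ and $\beta\in(0,1)$ the positive root of $f$. In both cases $f(\pm\beta)=0$. Spatial discretization: $M\in\mathbb N$, $h=L/M$; $\mathbb V_h$ is the space of real grid functions $v=\{v_{ij}\}_{i,j\in\mathbb Z}$ that are $M$-periodic in each index; $\langle v,w\rangle=h^2\sum_{i,j=1}^Mv_{ij}w_{ij}$, $\|v\|=\sqrt{\langle v,v\rangle}$, $\|v\|_\infty=\max_{1\le i,j\le M}|v_{ij}|$, $\mathbb V_\beta=\{v\in\mathbb V_h:\|v\|_\infty\le\beta\}$; $\Delta_hv_{ij}=h^{-2}(v_{i+1,j}+v_{i-1,j}+v_{i,j+1}+v_{i,j-1}-4v_{ij})$;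 $\nabla_hv_{ij}=\big(\frac{v_{i+1,j}-v_{ij}}h,\frac{v_{i,j+1}-v_{ij}}h\big)$ and $\|\nabla_hv\|^2=h^2\sum_{i,j=1}^M|\nabla_hv_{ij}|^2$. Scalar functions act on grid functions pointwise. $E_{1h}[v]=\langle F(v),1\rangle$ and $g_h(v,w)=\exp(w)/\exp(E_{1h}[v])$ for $v\in\mathbb V_h$ (with $\|v\|_\infty<1$ in the Flory–Huggins case) and $w\in\mathbb R$. The discrete modified energy is $\mathcal E_h[\phi,R]=\frac{\varepsilon^2}{2}\|\nabla_h\phi\|^2+R$. Auxiliary functional: $V:\mathbb R\to\mathbb R$ satisfies (A1) $V\in C^1(\mathbb R)\cap W^{2,\infty}(\mathbb R)$, $V(1)=1$, $V'(1)=0$, $|V'|\le K_1$; (A2) $0\le V\le K_2$ for a constant $K_2>0$; (A3) $|z_1-1|\le|z_2-1|$ implies $|V(z_1)-1|\le|V(z_2)-1|$. Time grid: $0=t_0<t_1<\dots<t_N=T$, $\tau_k=t_k-t_{k-1}$, $r_k=\tau_k/\tau_{k-1}$ ($k\ge2$), $\nabla_\tau v^k=v^k-v^{k-1}$, $\mathbb D_\tau v^k=\nabla_\tau v^k/\tau_k$, $\omega_\mu(t)=t^{\mu-1}/\Gamma(\mu)$. Constant $\kappa\ge0$; data $\phi^0\in\mathbb V_h$, $R^0\in\mathbb R$. For $n\ge2$ the predicted solution is $\hat\phi^n=\min\{\max\{(1+r_n)\phi^{n-1}-r_n\phi^{n-2},-\beta\},\beta\}$ (pointwise). $L1$-sESAV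 scheme: $A^{(n)}_{n-k}=\frac1{\tau_k}\int_{t_{k-1}}^{t_k}\omega_{1-\alpha}(t_n-s)\,ds$ and $\mathbb D^\alpha_\tau v^n=\sum_{k=1}^nA^{(n)}_{n-k}\nabla_\tau v^k$. For $n=1$, $\hat\phi^1\in\mathbb V_\beta$ is the solution of the nonlinear first-step equation $A^{(1)}_0(\hat\phi^1-\phi^0)=m(\varepsilon^2\Delta_h\hat\phi^1+f(\hat\phi^1))$. For $n\ge1$, with $V^n:=V(g_h(\hat\phi^n,R^{n-1}))$, $(\phi^n,R^n)$ is defined by $\mathbb D^\alpha_\tau\phi^n=m(\varepsilon^2\Delta_h\phi^n+V^nf(\hat\phi^n)-\kappa V^n(\phi^n-\hat\phi^n))$ and $\mathbb D_\tau R^n=V^n\langle-f(\hat\phi^n)+\kappa(\phi^n-\hat\phi^n),\mathbb D_\tau\phi^n\rangle$. *)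

From Stdlib Require Import Reals.
From Coquelicot Require Import Coquelicot.
Open Scope R_scope.

Definition F_dw (x : R) : R := / 4 * (1 - x ^ 2) ^ 2.
Definition f_dw (x : R) : R := x - x ^ 3.
Definition F_fh (theta thetac x : R) : R :=
  theta / 2 * ((1 + x) * ln (1 + x) + (1 - x) * ln (1 - x)) - thetac / 2 * x ^ 2.
Definition f_fh (theta thetac x : R) : R :=
  theta / 2 * ln ((1 - x) / (1 + x)) + thetac * x.

Definition Gamma (mu : R) : R :=
  RInt_gen (fun t => Rpower t (mu - 1) * exp (- t)) (at_right 0) (Rbar_locally p_infty).
(* omega_mu(t) = t^(mu-1)/Gamma(mu), used only for t > 0 *)
Definition omega (mu t : R) : R := Rpower t (mu - 1) / Gamma mu.

(* A grid function on the M x M periodic grid is represented by its values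
   v i j for 0 <= i, j < M; indices are taken modulo M (periodic extension). *)
Definition grid := nat -> nat -> R.

Fixpoint sumr (n : nat) (g : nat -> R) : R :=
  match n with O => 0 | S n' => sumr n' g + g n' end.

Definition gsum (M : nat) (g : grid) : R :=
  sumr M (fun i => sumr M (fun j => g i j)).

Definition ip (M : nat) (h : R) (v w : grid) : R :=
  h ^ 2 * gsum M (fun i j => v i j * w i j).

Definition nextI (M i : nat) : nat := Nat.modulo (S i) M.
Definition prevI (M i : nat) : nat := Nat.modulo (i + M - 1) M.

Definition lap_h (M : nat) (h : R) (v : grid) : grid := fun i j =>
  (v (nextI M i) j + v (prevI M i) j + v i (nextI M j) + v i (prevI M j)
   - 4 * v i j) / h ^ 2.

Definition grad_norm2 (M : nat) (h : R) (v : grid) : R :=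
  h ^ 2 * gsum M (fun i j =>
    ((v (nextI M i) j - v i j) / h) ^ 2 + ((v i (nextI M j) - v i j) / h) ^ 2).

Definition in_Vbeta (M : nat) (beta : R) (v : grid) : Prop :=
  forall i j, (i < M)%nat -> (j < M)%nat -> Rabs (v i j) <= beta.

Definition E1h (M : nat) (h : R) (F : R -> R) (v : grid) : R :=
  ip M h (fun i j => F (v i j)) (fun _ _ => 1).

Definition g_h (M : nat) (h : R) (F : R -> R) (v : grid) (w : R) : R :=
  exp w / exp (E1h M h F v).

Definition Eh (M : nat) (h eps : R) (phi : grid) (Rv : R) : R :=
  eps ^ 2 / 2 * grad_norm2 M h phi + Rv.

Definition tau (t : nat -> R) (k : nat) : R := t k - t (k - 1)%nat.
Definition ratio (t : nat -> R) (k : nat) : R := tau t k / tau t (k - 1)%nat.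

(* A^{(n)}_{n-k} = 1/tau_k int_{t_{k-1}}^{t_k} omega_{1-alpha}(t_n - s) ds
   (improper integral, the integrand being singular at s = t_n when k = n) *)
Definition L1coef (alpha : R) (t : nat -> R) (n k : nat) : R :=
  / tau t k * RInt_gen (fun s => omega (1 - alpha) (t n - s))
                       (at_right (t (k - 1)%nat)) (at_left (t k)).

Definition L1 (alpha : R) (t : nat -> R) (v : nat -> grid) (n : nat) : grid :=
  fun i j => sumr n (fun k' =>
    L1coef alpha t n (S k') * (v (S k') i j - v k' i j)).

Definition clip (beta x : R) : R := Rmin (Rmax x (- beta)) beta.

Definition V_assumptions (V : R -> R) (K1 K2 : R) : Prop :=
  (forall x, ex_derive V x) /\ (forall x, continuous (Derive V) x) /\
  (exists Lp, forall x y, Rabs (Derive V x - Derive V y) <= Lp * Rabs (x - y)) /\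
  V 1 = 1 /\ Derive V 1 = 0 /\ (forall x, Rabs (Derive V x) <= K1) /\
  0 < K2 /\ (forall x, 0 <= V x <= K2) /\
  (forall z1 z2, Rabs (z1 - 1) <= Rabs (z2 - 1) -> Rabs (V z1 - 1) <= Rabs (V z2 - 1)).

(* Testing the scheme with [phi^n - phi^(n-1)] gives, step by step,
   [E^n - E^(n-1) <= - <D^alpha phi^n, phi^n - phi^(n-1)> / m]: the Laplacian term by
   summation by parts, while the nonlinear term cancels exactly against the equation
   for [R].  Summing, energy stability reduces to the nonnegativity of the L1 quadratic
   form [sum_n w_n sum_(k <= n) A^(n)_(n-k) w_k].  Its weights are divided differences of
   the concave function [x^(1-alpha)] whose derivative is convex; this makes them
   nonnegative, monotone in both indices and with monotone row increments, and such a
   lower-triangular form is nonnegative: removing the last row leaves a form of the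
   same kind plus a form whose weights depend only on the column and are
   nondecreasing. *)

From Stdlib Require Import Reals Lra Lia Psatz Classical.
From Coquelicot Require Import Coquelicot.
Open Scope R_scope.

Lemma sumr_S n g : sumr (S n) g = sumr n g + g n.
Proof. reflexivity. Qed.

Lemma sumr_ext n f g : (forall k, (k < n)%nat -> f k = g k) -> sumr n f = sumr n g.
Proof.
  induction n as [|n IH]; intros Hfg; simpl; auto.
  rewrite IH by (intros; apply Hfg; lia).
  rewrite Hfg by lia; reflexivity.
Qed.

Lemma sumr_plus n f g : sumr n (fun k => f k + g k) = sumr n f + sumr n g.
Proof. induction n; simpl; [lra | rewrite IHn; lra]. Qed.

Lemma sumr_minus n f g : sumr n (fun k => f k - g k) = sumr n f - sumr n g.
Proof. induction n; simpl; [lra | rewrite IHn; lra]. Qed.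

Lemma sumr_scal n c f : sumr n (fun k => c * f k) = c * sumr n f.
Proof. induction n; simpl; [lra | rewrite IHn; lra]. Qed.

Lemma sumr_le n f g : (forall k, (k < n)%nat -> f k <= g k) -> sumr n f <= sumr n g.
Proof.
  induction n as [|n IH]; intros Hfg; simpl; [lra |].
  assert (f n <= g n) by (apply Hfg; lia).
  assert (sumr n f <= sumr n g) by (apply IH; intros; apply Hfg; lia).
  lra.
Qed.

Lemma sumr_nonneg n f : (forall k, (k < n)%nat -> 0 <= f k) -> 0 <= sumr n f.
Proof.
  intros Hf. replace 0 with (sumr n (fun _ => 0)).
  - apply sumr_le; auto.
  - induction n; simpl; [lra | rewrite IHn by (intros; apply Hf; lia); lra].
Qed.

Lemma sumr_Sl n g : sumr (S n) g = g 0%nat + sumr n (fun k => g (S k)).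
Proof. induction n; simpl in *; [lra | rewrite IHn; lra]. Qed.

Lemma sumr_telescope_le n (a b : nat -> R) :
  (forall k, (k < n)%nat -> a (S k) - a k <= b k) -> a n - a 0%nat <= sumr n b.
Proof.
  induction n as [|n IH]; intros Hab; simpl; [lra |].
  assert (a (S n) - a n <= b n) by (apply Hab; lia).
  assert (a n - a 0%nat <= sumr n b) by (apply IH; intros; apply Hab; lia).
  lra.
Qed.

Lemma nextI_lt M i : (S i < M)%nat -> nextI M i = S i.
Proof. intros; apply Nat.mod_small; auto. Qed.

Lemma nextI_last M i : S i = M -> nextI M i = 0%nat.
Proof. intros <-; apply Nat.Div0.mod_same. Qed.

Lemma prevI_nextI M i : (i < M)%nat -> prevI M (nextI M i) = i.
Proof.
  intros Hi. unfold prevI. destruct (Nat.lt_ge_cases (S i) M).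
  - rewrite nextI_lt by auto.
    replace (S i + M - 1)%nat with (i + 1 * M)%nat by lia.
    rewrite Nat.Div0.mod_add. apply Nat.mod_small; auto.
  - rewrite nextI_last by lia.
    replace (0 + M - 1)%nat with i by lia. apply Nat.mod_small; auto.
Qed.

Lemma sumr_nextI M g : (0 < M)%nat -> sumr M (fun i => g (nextI M i)) = sumr M g.
Proof.
  intros HM. destruct M as [|M]; [lia |].
  rewrite sumr_S, nextI_last, sumr_Sl by reflexivity.
  rewrite (sumr_ext M _ (fun i => g (S i))) by (intros; rewrite nextI_lt by lia; auto).
  lra.
Qed.

Lemma gsum_ext M f g :
  (forall i j, (i < M)%nat -> (j < M)%nat -> f i j = g i j) -> gsum M f = gsum M g.
Proof. intros Hfg. apply sumr_ext; intros. apply sumr_ext; auto. Qed.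

Lemma gsum_plus M f g : gsum M (fun i j => f i j + g i j) = gsum M f + gsum M g.
Proof. unfold gsum. rewrite <- sumr_plus. apply sumr_ext; intros. apply sumr_plus. Qed.

Lemma gsum_minus M f g : gsum M (fun i j => f i j - g i j) = gsum M f - gsum M g.
Proof. unfold gsum. rewrite <- sumr_minus. apply sumr_ext; intros. apply sumr_minus. Qed.

Lemma gsum_scal M c f : gsum M (fun i j => c * f i j) = c * gsum M f.
Proof. unfold gsum. rewrite <- sumr_scal. apply sumr_ext; intros. apply sumr_scal. Qed.

Lemma gsum_le M f g :
  (forall i j, (i < M)%nat -> (j < M)%nat -> f i j <= g i j) -> gsum M f <= gsum M g.
Proof. intros Hfg. apply sumr_le; intros. apply sumr_le; auto. Qed.

Lemma gsum_nonneg M f :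
  (forall i j, (i < M)%nat -> (j < M)%nat -> 0 <= f i j) -> 0 <= gsum M f.
Proof. intros Hf. apply sumr_nonneg; intros. apply sumr_nonneg; auto. Qed.

Lemma gsum_nextI_l M g : (0 < M)%nat -> gsum M (fun i j => g (nextI M i) j) = gsum M g.
Proof. intros; apply (sumr_nextI M (fun i => sumr M (g i))); auto. Qed.

Lemma gsum_nextI_r M g : (0 < M)%nat -> gsum M (fun i j => g i (nextI M j)) = gsum M g.
Proof. intros; apply sumr_ext; intros; apply (sumr_nextI M (g _)); auto. Qed.

Lemma sumr_gsum n M g :
  sumr n (fun k => gsum M (g k)) = gsum M (fun i j => sumr n (fun k => g k i j)).
Proof.
  induction n as [|n IH]; simpl.
  - symmetry. rewrite (gsum_ext M _ (fun _ _ => 0 * 0)) by (intros; ring).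
    rewrite gsum_scal; lra.
  - rewrite IH, <- gsum_plus. reflexivity.
Qed.

Definition dxI M (u : grid) : grid := fun i j => u (nextI M i) j - u i j.
Definition dyI M (u : grid) : grid := fun i j => u i (nextI M j) - u i j.

Lemma gsum_lap_mul M (u v : grid) : (0 < M)%nat ->
  gsum M (fun i j => (u (nextI M i) j + u (prevI M i) j + u i (nextI M j)
                      + u i (prevI M j) - 4 * u i j) * v i j)
  = - gsum M (fun i j => dxI M u i j * dxI M v i j + dyI M u i j * dyI M v i j).
Proof.
  intros HM. unfold dxI, dyI.
  assert (Hx : gsum M (fun i j => u (prevI M i) j * v i j + u (nextI M i) j * v (nextI M i) j)
             = gsum M (fun i j => u i j * v (nextI M i) j + u i j * v i j)).
  { rewrite gsum_plus, gsum_plus,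
      <- (gsum_nextI_l M (fun i j => u (prevI M i) j * v i j)),
      (gsum_nextI_l M (fun i j => u i j * v i j)) by auto.
    f_equal. apply gsum_ext; intros. rewrite prevI_nextI; auto. }
  assert (Hy : gsum M (fun i j => u i (prevI M j) * v i j + u i (nextI M j) * v i (nextI M j))
             = gsum M (fun i j => u i j * v i (nextI M j) + u i j * v i j)).
  { rewrite gsum_plus, gsum_plus,
      <- (gsum_nextI_r M (fun i j => u i (prevI M j) * v i j)),
      (gsum_nextI_r M (fun i j => u i j * v i j)) by auto.
    f_equal. apply gsum_ext; intros. rewrite prevI_nextI; auto. }
  apply Rplus_eq_reg_r with
    (gsum M (fun i j => (u (nextI M i) j - u i j) * (v (nextI M i) j - v i j)
                        + (u i (nextI M j) - u i j) * (v i (nextI M j) - v i j))).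
  rewrite Rplus_opp_l, <- gsum_plus.
  rewrite (gsum_ext M _ (fun i j =>
      ((u (prevI M i) j * v i j + u (nextI M i) j * v (nextI M i) j)
       - (u i j * v (nextI M i) j + u i j * v i j))
    + ((u i (prevI M j) * v i j + u i (nextI M j) * v i (nextI M j))
       - (u i j * v i (nextI M j) + u i j * v i j)))) by (intros; ring).
  rewrite gsum_plus, !gsum_minus, Hx, Hy. ring.
Qed.

Lemma grad_norm2_eq M h u : h <> 0 ->
  grad_norm2 M h u = gsum M (fun i j => dxI M u i j ^ 2 + dyI M u i j ^ 2).
Proof.
  intros Hh. unfold grad_norm2.
  rewrite (gsum_ext M _ (fun i j => / h ^ 2 * (dxI M u i j ^ 2 + dyI M u i j ^ 2)))
    by (intros; unfold dxI, dyI; field; auto).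
  rewrite gsum_scal. field. auto.
Qed.

Lemma ip_lap_eq M h u v : (0 < M)%nat -> h <> 0 ->
  ip M h (lap_h M h u) v
  = - gsum M (fun i j => dxI M u i j * dxI M v i j + dyI M u i j * dyI M v i j).
Proof.
  intros HM Hh. unfold ip, lap_h. rewrite <- gsum_lap_mul by auto.
  rewrite <- gsum_scal. apply gsum_ext; intros. field. auto.
Qed.

(* Pointwise, from a (a - b) >= (a^2 - b^2) / 2. *)
Lemma ip_lap_sub_le M h u u' : (0 < M)%nat -> h <> 0 ->
  ip M h (lap_h M h u) (fun i j => u i j - u' i j)
  <= - (grad_norm2 M h u - grad_norm2 M h u') / 2.
Proof.
  intros HM Hh. rewrite ip_lap_eq, !grad_norm2_eq by auto.
  rewrite <- gsum_minus.
  unfold Rdiv. rewrite Ropp_mult_distr_l_reverse, Rmult_comm, <- gsum_scal.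
  apply Ropp_le_contravar, gsum_le. intros i j _ _. unfold dxI, dyI.
  pose proof (pow2_ge_0 ((u (nextI M i) j - u i j) - (u' (nextI M i) j - u' i j))).
  pose proof (pow2_ge_0 ((u i (nextI M j) - u i j) - (u' i (nextI M j) - u' i j))).
  nra.
Qed.

Lemma Eh_step_le M h eps m kappa (D u u' fh uhat : grid) Vn R1 R0 tu :
  (0 < M)%nat -> h <> 0 -> 0 < m -> tu <> 0 ->
  (forall i j, (i < M)%nat -> (j < M)%nat ->
     D i j = m * (eps ^ 2 * lap_h M h u i j + Vn * fh i j - kappa * Vn * (u i j - uhat i j))) ->
  (R1 - R0) / tu = Vn * ip M h (fun i j => - fh i j + kappa * (u i j - uhat i j))
                              (fun i j => (u i j - u' i j) / tu) ->
  Eh M h eps u R1 - Eh M h eps u' R0 <= - ip M h D (fun i j => u i j - u' i j) / m.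
Proof.
  intros HM Hh Hm Ht HD HR.
  set (P := gsum M (fun i j => (fh i j - kappa * (u i j - uhat i j)) * (u i j - u' i j))).
  assert (HDP : ip M h D (fun i j => u i j - u' i j)
      = m * eps ^ 2 * ip M h (lap_h M h u) (fun i j => u i j - u' i j) + m * Vn * (h ^ 2 * P)).
  { unfold ip, P.
    rewrite (gsum_ext M _ (fun i j => m * eps ^ 2 * (lap_h M h u i j * (u i j - u' i j))
        + m * Vn * ((fh i j - kappa * (u i j - uhat i j)) * (u i j - u' i j))))
      by (intros; rewrite HD by auto; ring).
    rewrite gsum_plus, !gsum_scal. ring. }
  assert (HRP : R1 - R0 = - Vn * (h ^ 2 * P)).
  { unfold ip in HR.
    rewrite (gsum_ext M _ (fun i j => - / tu * ((fh i j - kappa * (u i j - uhat i j)) * (u i j - u' i j))))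
      in HR by (intros; field; auto).
    rewrite gsum_scal in HR. fold P in HR.
    apply (Rmult_eq_reg_r (/ tu)); [| apply Rinv_neq_0_compat; auto].
    change ((R1 - R0) / tu = - Vn * (h ^ 2 * P) / tu). rewrite HR. field. auto. }
  assert (Hlap := ip_lap_sub_le M h u u' HM Hh).
  assert (eps ^ 2 * ip M h (lap_h M h u) (fun i j => u i j - u' i j)
          <= eps ^ 2 * (- (grad_norm2 M h u - grad_norm2 M h u') / 2))
    by (apply Rmult_le_compat_l; [apply pow2_ge_0 | exact Hlap]).
  unfold Eh. rewrite HDP.
  replace (- (m * eps ^ 2 * ip M h (lap_h M h u) (fun i j => u i j - u' i j) + m * Vn * (h ^ 2 * P)) / m)
    with (- (eps ^ 2 * ip M h (lap_h M h u) (fun i j => u i j - u' i j)) - Vn * (h ^ 2 * P))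
    by (field; lra).
  lra.
Qed.

Definition lower_form (N : nat) (s : nat -> nat -> R) (w : nat -> R) : R :=
  sumr N (fun n => w n * sumr (S n) (fun k => s n k * w k)).

(* The induction invariant is a Cauchy-Schwarz type bound
   [e (2 L - T) >= S^2] valid for every [e] dominating the weights. *)
Lemma lower_form_column_invariant q (d w : nat -> R) :
  (forall k, (k < q)%nat -> 0 <= d k) ->
  (forall k, (S k < q)%nat -> d k <= d (S k)) ->
  let L := lower_form q (fun _ k => d k) w in
  let T := sumr q (fun k => d k * w k ^ 2) in
  let S := sumr q (fun k => d k * w k) in
  0 <= 2 * L - T /\
  forall e, 0 <= e -> ((0 < q)%nat -> d (q - 1)%nat <= e) -> S ^ 2 <= e * (2 * L - T).
Proof.
  induction q as [|q IH]; intros Hd0 Hd L T S.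
  - subst L T S; unfold lower_form; simpl. split; [lra | intros; nra].
  - destruct IH as [IH0 IH]; [intros; apply Hd0; lia | intros; apply Hd; lia |].
    subst L T S. unfold lower_form in *. rewrite !sumr_S.
    set (L0 := sumr q (fun n => w n * sumr (S n) (fun k => d k * w k))) in *.
    set (T0 := sumr q (fun k => d k * w k ^ 2)) in *.
    set (S0 := sumr q (fun k => d k * w k)) in *.
    assert (Hdq : 0 <= d q) by (apply Hd0; lia).
    assert (HS0 : S0 ^ 2 <= d q * (2 * L0 - T0)).
    { apply IH; auto. intros. replace q with (S (q - 1)) at 2 by lia. apply Hd. lia. }
    set (X := 2 * (L0 + w q * (S0 + d q * w q)) - (T0 + d q * w q ^ 2)).
    assert (HX : (S0 + d q * w q) ^ 2 <= d q * X) by (unfold X; nra).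
    assert (HX0 : 0 <= X).
    { destruct (Rle_lt_dec (d q) 0) as [Hz | Hpos].
      - assert (d q = 0) as Hz' by lra. rewrite Hz' in HS0.
        assert (HS0z : S0 = 0) by nra. unfold X. rewrite Hz', HS0z. nra.
      - pose proof (pow2_ge_0 (S0 + d q * w q)). nra. }
    split; auto.
    intros e He Hde. replace (S q - 1)%nat with q in Hde by lia.
    specialize (Hde ltac:(lia)). nra.
Qed.

Lemma lower_form_column_nonneg q (d w : nat -> R) :
  (forall k, (k < q)%nat -> 0 <= d k) ->
  (forall k, (S k < q)%nat -> d k <= d (S k)) ->
  0 <= lower_form q (fun _ k => d k) w.
Proof.
  intros Hd0 Hd. destruct (lower_form_column_invariant q d w Hd0 Hd) as [H _].
  assert (0 <= sumr q (fun k => d k * w k ^ 2)).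
  { apply sumr_nonneg. intros k Hk. specialize (Hd0 k Hk). nra. }
  lra.
Qed.

Definition L1_kernel (N : nat) (s : nat -> nat -> R) : Prop :=
  (forall n k, (k <= n < N)%nat -> 0 <= s n k) /\
  (forall n n' k, (k <= n)%nat -> (n <= n' < N)%nat -> s n' k <= s n k) /\
  (forall n k, (S k <= n < N)%nat -> s n k <= s n (S k)) /\
  (forall n n' k, (S k <= n)%nat -> (n <= n' < N)%nat ->
     s n' (S k) - s n' k <= s n (S k) - s n k).

(* Peel off the last row [s N _]: what remains is again an L1 kernel, and the
   last row contributes a column form. *)
Lemma lower_form_nonneg N s w : L1_kernel N s -> 0 <= lower_form N s w.
Proof.
  revert s. induction N as [|N IH]; intros s [Hpos [Hcol [Hrow Hinc]]].
  - unfold lower_form; simpl; lra.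
  - assert (Hsplit : lower_form (S N) s w
        = lower_form N (fun n k => s n k - s N k) w + lower_form (S N) (fun _ k => s N k) w).
    { unfold lower_form. rewrite !sumr_S.
      rewrite (sumr_ext N (fun n => w n * sumr (S n) (fun k => s n k * w k))
        (fun n => w n * sumr (S n) (fun k => (s n k - s N k) * w k)
                  + w n * sumr (S n) (fun k => s N k * w k))).
      - rewrite sumr_plus. ring.
      - intros n Hn. rewrite <- Rmult_plus_distr_l, <- sumr_plus. f_equal.
        apply sumr_ext. intros. ring. }
    rewrite Hsplit. apply Rplus_le_le_0_compat.
    + apply IH. repeat split.
      * intros n k Hk. assert (s N k <= s n k) by (apply Hcol; lia). lra.
      * intros n n' k Hk Hn. assert (s n' k <= s n k) by (apply Hcol; lia). lra.
      * intros n k Hk. assert (s N (S k) - s N k <= s n (S k) - s n k) by (apply Hinc; lia). lra.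
      * intros n n' k Hk Hn.
        assert (s n' (S k) - s n' k <= s n (S k) - s n k) by (apply Hinc; lia). lra.
    + apply lower_form_column_nonneg; intros; [apply Hpos | apply Hrow]; lia.
Qed.

Definition divdiff (g : R -> R) (a b : R) : R := (g b - g a) / (b - a).

Lemma locally_R x (P : R -> Prop) e :
  0 < e -> (forall y, Rabs (y - x) < e -> P y) -> locally x P.
Proof. intros He HP. exists (mkposreal e He). intros y Hy. apply HP, Hy. Qed.

Lemma nonincreasing_of_derive_nonpos g dg a b : a <= b ->
  (forall x, a < x < b -> is_derive g x (dg x)) -> (forall x, a < x < b -> dg x <= 0) ->
  (forall x, a <= x <= b -> continuous g x) -> g b <= g a.
Proof.
  intros Hab Hd Hneg Hc. destruct (Req_dec a b) as [<- | Hab']; [lra |].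
  set (dg' := fun x => if Rlt_dec a x then if Rlt_dec x b then dg x else 0 else 0).
  assert (Hdg' : forall x, a < x < b -> dg' x = dg x).
  { intros x Hx. unfold dg'. destruct (Rlt_dec a x); [| lra]. destruct (Rlt_dec x b); [auto | lra]. }
  destruct (MVT_gen g a b dg') as [c [Hc1 Hc2]];
    rewrite ?Rmin_left, ?Rmax_right in * by lra.
  - intros x Hx. rewrite Hdg' by lra. apply Hd; lra.
  - intros x Hx. apply continuity_pt_filterlim, Hc, Hx.
  - assert (dg' c <= 0).
    { unfold dg'. destruct (Rlt_dec a c); [destruct (Rlt_dec c b) |]; try lra.
      apply Hneg; lra. }
    nra.
Qed.

Lemma divdiff_le_of_derive_antitone g dg u v w : u < v < w ->
  (forall x, u < x < w -> is_derive g x (dg x)) -> (forall x, u <= x <= w -> continuous g x) ->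
  (forall x y, u < x -> x <= y -> y < w -> dg y <= dg x) ->
  divdiff g v w <= divdiff g u v.
Proof.
  intros Huvw Hd Hc Hdg.
  set (G := fun y => g y - dg v * y).
  assert (HG : forall x, u < x < w -> is_derive G x (dg x - dg v)).
  { intros x Hx. apply (is_derive_minus g (fun y => dg v * y)); [apply Hd, Hx |].
    auto_derive; auto; ring. }
  assert (HGc : forall x, u <= x <= w -> continuous G x).
  { intros x Hx. apply (continuous_minus g (fun y => dg v * y)); [apply Hc, Hx |].
    apply (continuous_scal_r (dg v) (fun y : R => y)), continuous_id. }
  assert (Hright : G w <= G v).
  { apply (nonincreasing_of_derive_nonpos G (fun x => dg x - dg v)); try lra.
    - intros; apply HG; lra.
    - intros x Hx. assert (dg x <= dg v) by (apply Hdg; lra). lra.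
    - intros; apply HGc; lra. }
  assert (Hleft : - G v <= - G u).
  { apply (nonincreasing_of_derive_nonpos (fun y => - G y) (fun x => - (dg x - dg v))); try lra.
    - intros x Hx. apply (is_derive_opp G), HG. lra.
    - intros x Hx. assert (dg v <= dg x) by (apply Hdg; lra). lra.
    - intros. apply (continuous_opp G), HGc. lra. }
  unfold G, divdiff in *.
  apply Rle_trans with (dg v).
  - apply Rmult_le_reg_r with (w - v); [lra |]. unfold Rdiv. rewrite Rmult_assoc, Rinv_l; lra.
  - apply Rmult_le_reg_r with (v - u); [lra |]. unfold Rdiv. rewrite Rmult_assoc, Rinv_l; lra.
Qed.

Lemma is_derive_divdiff_shift W dW a e f y : e < f -> a < y + e ->
  (forall x, a < x -> is_derive W x (dW x)) ->
  is_derive (fun z => divdiff W (z + e) (z + f)) y (divdiff dW (y + e) (y + f)).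
Proof.
  intros Hef Hy HW. unfold divdiff.
  assert (HD : forall x, a < x -> Derive (fun z => W z) x = dW x)
    by (intros; apply is_derive_unique, HW; auto).
  auto_derive.
  - repeat split; try (eexists; apply HW); lra.
  - rewrite !HD by lra. field. lra.
Qed.

Lemma continuous_divdiff_shift W e f y :
  continuous W (y + e) -> continuous W (y + f) ->
  continuous (fun z => divdiff W (z + e) (z + f)) y.
Proof.
  intros He Hf. unfold divdiff.
  assert (Hshift : forall c, continuous W (y + c) -> continuous (fun z => W (z + c)) y).
  { intros c Hc. apply (continuous_comp (fun z => z + c) W); [| auto].
    apply (continuous_plus (fun z : R => z) (fun _ => c)); [apply continuous_id | apply continuous_const]. }
  apply (continuous_mult (fun z => W (z + f) - W (z + e)) (fun z => / (z + f - (z + e)))).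
  - apply (continuous_minus (fun z => W (z + f)) (fun z => W (z + e))); auto.
  - apply (continuous_ext (fun _ => / (f - e))); [intros; f_equal; ring | apply continuous_const].
Qed.

Section ConcaveDivdiff.
Variables (W dW : R -> R) (a0 : R).
Hypothesis W_derive : forall x, a0 < x -> is_derive W x (dW x).
Hypothesis W_continuous : forall x, a0 <= x -> continuous W x.
Hypothesis dW_antitone : forall x y, a0 < x -> x <= y -> dW y <= dW x.

Lemma divdiff_antitone a b c : a0 <= a -> a < b < c -> divdiff W b c <= divdiff W a b.
Proof.
  intros Ha Habc. apply (divdiff_le_of_derive_antitone W dW); auto.
  - intros; apply W_derive; lra.
  - intros; apply W_continuous; lra.
  - intros; apply dW_antitone; lra.
Qed.

Lemma divdiff_shift_le a b d : a0 <= a -> a < b -> 0 <= d ->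
  divdiff W (a + d) (b + d) <= divdiff W a b.
Proof.
  intros Ha Hab Hd.
  assert (H : divdiff W (d + a) (d + b) <= divdiff W (0 + a) (0 + b)).
  { apply (nonincreasing_of_derive_nonpos (fun z => divdiff W (z + a) (z + b))
             (fun z => divdiff dW (z + a) (z + b))); auto.
    - intros z Hz. apply (is_derive_divdiff_shift W dW a0); auto; lra.
    - intros z Hz. unfold divdiff.
      assert (dW (z + b) <= dW (z + a)) by (apply dW_antitone; lra).
      apply Rmult_le_0_r; [lra | left; apply Rinv_0_lt_compat; lra].
    - intros z Hz. apply continuous_divdiff_shift; apply W_continuous; lra. }
  rewrite !(Rplus_comm d), !Rplus_0_l in H. exact H.
Qed.

Hypothesis dW_convex : forall u v w, a0 < u -> u < v < w -> divdiff dW u v <= divdiff dW v w.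

Lemma divdiff_shift_sub_le a b c d : a0 <= a -> a < b < c -> 0 <= d ->
  divdiff W (a + d) (b + d) - divdiff W (b + d) (c + d) <= divdiff W a b - divdiff W b c.
Proof.
  intros Ha Habc Hd.
  set (G := fun z => divdiff W (z + a) (z + b) - divdiff W (z + b) (z + c)).
  assert (H : G d <= G 0).
  { apply (nonincreasing_of_derive_nonpos G
             (fun z => divdiff dW (z + a) (z + b) - divdiff dW (z + b) (z + c))); auto.
    - intros z Hz. apply (is_derive_minus (fun z => divdiff W (z + a) (z + b))
                                          (fun z => divdiff W (z + b) (z + c)));
        apply (is_derive_divdiff_shift W dW a0); auto; lra.
    - intros z Hz. assert (divdiff dW (z + a) (z + b) <= divdiff dW (z + b) (z + c))
        by (apply dW_convex; lra). lra.
    - intros z Hz. apply (continuous_minus (fun z => divdiff W (z + a) (z + b))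
                                          (fun z => divdiff W (z + b) (z + c)));
        apply continuous_divdiff_shift; apply W_continuous; lra. }
  unfold G in H. rewrite !(Rplus_comm d), !Rplus_0_l in H. exact H.
Qed.

End ConcaveDivdiff.

Lemma Rpower_gt_0 x e : 0 < Rpower x e.
Proof. apply exp_pos. Qed.

Lemma Rpower_antitone x y e : e < 0 -> 0 < x -> x <= y -> Rpower y e <= Rpower x e.
Proof.
  intros He Hx Hxy. destruct (Req_dec x y) as [<- | Hne]; [lra |].
  left. apply exp_increasing. assert (ln x < ln y) by (apply ln_increasing; lra). nra.
Qed.

Lemma Rpower_1_l e : Rpower 1 e = 1.
Proof. unfold Rpower. rewrite ln_1, Rmult_0_r. apply exp_0. Qed.

Lemma is_derive_Rpower x e : 0 < x -> is_derive (fun y => Rpower y e) x (e * Rpower x (e - 1)).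
Proof. intros; apply is_derive_Reals, derivable_pt_lim_power; auto. Qed.

(* [x^p] for [x > 0], extended by [0]; Stdlib's [Rpower 0 p] is [1], not [0]. *)
Definition pow_pos (p x : R) : R := if Rlt_dec 0 x then Rpower x p else 0.
Definition dpow_pos (p x : R) : R := p * Rpower x (p - 1).

Lemma pow_pos_gt_0 p x : 0 < x -> pow_pos p x = Rpower x p.
Proof. intros; unfold pow_pos; destruct (Rlt_dec 0 x); [auto | lra]. Qed.

Lemma pow_pos_le_0 p x : x <= 0 -> pow_pos p x = 0.
Proof. intros; unfold pow_pos; destruct (Rlt_dec 0 x); [lra | auto]. Qed.

Lemma is_derive_pow_pos p x : 0 < x -> is_derive (pow_pos p) x (dpow_pos p x).
Proof.
  intros Hx. apply is_derive_ext_loc with (fun y => Rpower y p); [| apply is_derive_Rpower; auto].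
  apply (locally_R x _ x Hx). intros y Hy. apply Rabs_def2 in Hy. rewrite pow_pos_gt_0; lra.
Qed.

Lemma continuous_pow_pos p x : 0 < p -> continuous (pow_pos p) x.
Proof.
  intros Hp. destruct (Rtotal_order x 0) as [Hx | [-> | Hx]].
  - apply continuous_ext_loc with (fun _ => 0); [| apply continuous_const].
    apply (locally_R x _ (- x)); [lra |]. intros y Hy. apply Rabs_def2 in Hy.
    rewrite pow_pos_le_0; lra.
  - apply filterlim_locally. intros eps.
    set (delta := Rpower eps (/ p)).
    exists (mkposreal delta (Rpower_gt_0 _ _)). intros y Hy.
    change (Rabs (pow_pos p y - pow_pos p 0) < eps).
    change (Rabs (y - 0) < delta) in Hy.
    rewrite (pow_pos_le_0 p 0), Rminus_0_r by lra. rewrite Rminus_0_r in Hy.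
    destruct (Rlt_dec 0 y) as [Hy0 | Hy0].
    + rewrite pow_pos_gt_0, Rabs_right by (auto; left; apply Rpower_gt_0).
      rewrite Rabs_right in Hy by lra.
      replace (pos eps) with (Rpower delta p).
      * apply Rlt_Rpower_l; auto.
      * unfold delta. rewrite Rpower_mult, Rinv_l, Rpower_1 by (lra || apply cond_pos). reflexivity.
    + rewrite pow_pos_le_0, Rabs_R0 by lra. apply cond_pos.
  - apply (ex_derive_continuous (pow_pos p)). eexists. apply is_derive_pow_pos; auto.
Qed.

Lemma pow_pos_increasing p a b : 0 < p -> 0 <= a -> a < b -> pow_pos p a < pow_pos p b.
Proof.
  intros Hp Ha Hab. rewrite (pow_pos_gt_0 p b) by lra.
  destruct (Req_dec a 0) as [-> | Ha0].
  - rewrite pow_pos_le_0 by lra. apply Rpower_gt_0.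
  - rewrite pow_pos_gt_0 by lra. apply Rlt_Rpower_l; lra.
Qed.

Lemma dpow_pos_antitone p x y : 0 < p < 1 -> 0 < x -> x <= y -> dpow_pos p y <= dpow_pos p x.
Proof. intros. unfold dpow_pos. apply Rmult_le_compat_l; [lra | apply Rpower_antitone; lra]. Qed.

Lemma dpow_pos_convex p u v w : 0 < p < 1 -> 0 < u -> u < v < w ->
  divdiff (dpow_pos p) u v <= divdiff (dpow_pos p) v w.
Proof.
  intros Hp Hu Huvw.
  assert (H : divdiff (fun x => - dpow_pos p x) v w <= divdiff (fun x => - dpow_pos p x) u v).
  { apply (divdiff_le_of_derive_antitone (fun x => - dpow_pos p x)
             (fun x => - (p * ((p - 1) * Rpower x (p - 1 - 1))))); auto.
    - intros x Hx. apply (is_derive_opp (dpow_pos p)), (is_derive_scal (fun y => Rpower y (p - 1))).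
      apply is_derive_Rpower. lra.
    - intros x Hx. apply (continuous_opp (dpow_pos p)), (ex_derive_continuous (dpow_pos p)).
      eexists. apply (is_derive_scal (fun y => Rpower y (p - 1))), is_derive_Rpower. lra.
    - intros x y Hx Hxy Hy.
      assert (Rpower y (p - 1 - 1) <= Rpower x (p - 1 - 1)) by (apply Rpower_antitone; lra).
      assert (0 < p * (1 - p)) by nra. nra. }
  unfold divdiff, Rdiv in *. lra.
Qed.

Lemma divdiff_pow_pos_pos p a b : 0 < p -> 0 <= a -> a < b -> 0 < divdiff (pow_pos p) a b.
Proof.
  intros. unfold divdiff.
  assert (pow_pos p a < pow_pos p b) by (apply pow_pos_increasing; auto).
  apply Rdiv_lt_0_compat; lra.
Qed.

Lemma is_RInt_gen_at_right_at_left (F f : R -> R) a b : a < b ->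
  continuous F a -> continuous F b ->
  (forall x, a < x < b -> is_derive F x (f x)) -> (forall x, a < x < b -> continuous f x) ->
  is_RInt_gen f (at_right a) (at_left b) (F b - F a).
Proof.
  intros Hab Ha Hb Hd Hc.
  set (m := (a + b) / 2).
  assert (Hin : filter_prod (at_right a) (at_left b)
                  (fun uv => forall x, Rmin (fst uv) (snd uv) <= x <= Rmax (fst uv) (snd uv) -> a < x < b)).
  { apply (Filter_prod _ _ _ (fun u => a < u < m) (fun v => m < v < b)).
    - apply (locally_R a _ (m - a)); [unfold m; lra |].
      intros y Hy Hay. apply Rabs_def2 in Hy. lra.
    - apply (locally_R b _ (b - m)); [unfold m; lra |].
      intros y Hy Hyb. apply Rabs_def2 in Hy. lra.
    - intros u v Hu Hv x. simpl. rewrite Rmin_left, Rmax_right by lra. lra. }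
  apply (is_RInt_gen_ext (Derive F)).
  - revert Hin. apply filter_imp. intros uv Huv x Hx.
    apply is_derive_unique, Hd, Huv. lra.
  - apply is_RInt_gen_Derive.
    + revert Hin. apply filter_imp. intros uv Huv x Hx. eexists. apply Hd, Huv, Hx.
    + revert Hin. apply filter_imp. intros uv Huv x Hx.
      specialize (Huv x Hx).
      apply continuous_ext_loc with f; [| apply Hc, Huv].
      apply (locally_R x _ (Rmin (x - a) (b - x))); [apply Rmin_case; lra |].
      intros y Hy. apply Rabs_def2 in Hy.
      assert (Rmin (x - a) (b - x) <= x - a) by apply Rmin_l.
      assert (Rmin (x - a) (b - x) <= b - x) by apply Rmin_r.
      symmetry. apply is_derive_unique, Hd. lra.
    + apply (filterlim_filter_le_1 (F := locally a)); [apply filter_le_within | exact Ha].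
    + apply (filterlim_filter_le_1 (F := locally b)); [apply filter_le_within | exact Hb].
Qed.

Lemma continuous_comp_reflect (g : R -> R) c x :
  continuous g (c - x) -> continuous (fun s => g (c - s)) x.
Proof.
  intros Hg. apply (continuous_comp (fun s => c - s) g); [| exact Hg].
  apply (continuous_minus (fun _ => c) (fun s : R => s)); [apply continuous_const | apply continuous_id].
Qed.

(* [- (T - s)^(1 - alpha) / ((1 - alpha) Gamma (1 - alpha))] is an antiderivative of
   [omega (1 - alpha) (T - s)] that stays continuous at [s = T]. *)
Lemma L1coef_divdiff alpha (t : nat -> R) n k :
  0 < alpha < 1 -> Gamma (1 - alpha) <> 0 -> t (k - 1)%nat < t k -> t k <= t n ->
  L1coef alpha t n k
  = divdiff (pow_pos (1 - alpha)) (t n - t k) (t n - t (k - 1)%nat)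
    / ((1 - alpha) * Gamma (1 - alpha)).
Proof.
  intros Ha HG Hk Hkn.
  set (p := 1 - alpha). set (T := t n).
  set (F := fun s => - pow_pos p (T - s) / (p * Gamma p)).
  assert (HF : forall x, continuous F x).
  { intros x. apply (continuous_scal_l (fun s => - pow_pos p (T - s)) (/ (p * Gamma p))).
    apply (continuous_opp (fun s => pow_pos p (T - s))), continuous_comp_reflect, continuous_pow_pos.
    unfold p; lra. }
  assert (Hint : is_RInt_gen (fun s => omega p (T - s)) (at_right (t (k - 1)%nat)) (at_left (t k))
                   (F (t k) - F (t (k - 1)%nat))).
  { apply is_RInt_gen_at_right_at_left; auto.
    - intros x Hx. unfold F, omega.
      apply (is_derive_ext (fun s => / (p * Gamma p) * - pow_pos p (T - s)));
        [intros s; unfold Rdiv; apply Rmult_comm |].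
      replace (Rpower (T - x) (p - 1) / Gamma p) with (/ (p * Gamma p) * - (- 1 * dpow_pos p (T - x)))
        by (unfold dpow_pos; field; unfold p; split; lra).
      apply is_derive_scal, (is_derive_opp (fun s => pow_pos p (T - s))).
      apply (is_derive_comp (pow_pos p) (fun s => T - s)); [apply is_derive_pow_pos; unfold T; lra |].
      auto_derive; auto; ring.
    - intros x Hx. unfold omega.
      apply (continuous_scal_l (fun s => Rpower (T - s) (p - 1)) (/ Gamma p)).
      apply (continuous_comp_reflect (fun y => Rpower y (p - 1))).
      apply (ex_derive_continuous (K := R_AbsRing) (V := R_NormedModule) (fun y => Rpower y (p - 1))).
      eexists. apply is_derive_Rpower. unfold T; lra. }
  unfold L1coef. fold p T. rewrite (is_RInt_gen_unique _ _ Hint).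
  unfold F, divdiff, tau. field. unfold p, T. repeat split; lra.
Qed.

Lemma is_RInt_gen_nonneg_bounded (f : R -> R) a c B : a < c ->
  (forall x, a < x -> continuous f x) -> (forall x, a < x -> 0 <= f x) ->
  (forall x y, a < x < c -> c < y -> RInt f x y <= B) ->
  exists l, is_RInt_gen f (at_right a) (Rbar_locally p_infty) l /\
            forall x y, a < x < c -> c < y -> RInt f x y <= l.
Proof.
  intros Hac Hc Hf HB.
  assert (Hex : forall x y, a < x <= y -> ex_RInt f x y).
  { intros x y Hxy. apply (ex_RInt_continuous (V := R_CompleteNormedModule)).
    rewrite Rmin_left, Rmax_right by lra. intros; apply Hc; lra. }
  assert (Hpos : forall x y, a < x <= y -> 0 <= RInt f x y).
  { intros x y Hxy. apply RInt_ge_0; auto; try lra. intros; apply Hf; lra. }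
  set (E := fun r => exists x y, a < x < c /\ c < y /\ r = RInt f x y).
  destruct (completeness E) as [l [Hub Hlub]].
  - exists B. intros r (x & y & Hx & Hy & ->). auto.
  - exists (RInt f ((a + c) / 2) (c + 1)). exists ((a + c) / 2), (c + 1). repeat split; lra.
  - exists l. split; [| intros x y Hx Hy; apply Hub; exists x, y; auto].
    intros P [eps Heps].
    assert (Happrox : exists x0 y0, a < x0 < c /\ c < y0 /\ l - eps < RInt f x0 y0).
    { apply NNPP. intros Hno. assert (l <= l - eps); [| destruct eps; simpl in *; lra].
      apply Hlub. intros r (x & y & Hx & Hy & ->).
      apply Rnot_lt_le. intros Hlt. apply Hno. exists x, y. auto. }
    destruct Happrox as (x0 & y0 & Hx0 & Hy0 & Hl).
    apply (Filter_prod _ _ _ (fun x => a < x < x0) (fun y => y0 < y)).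
    + apply (locally_R a _ (x0 - a)); [lra |]. intros z Hz Haz. apply Rabs_def2 in Hz. lra.
    + exists y0. auto.
    + intros x y Hx Hy. exists (RInt f x y). split.
      * apply (RInt_correct (V := R_CompleteNormedModule)), Hex. lra.
      * apply Heps. change (Rabs (RInt f x y - l) < eps).
        assert (RInt f x y <= l) by (apply Hub; exists x, y; repeat split; lra).
        assert (Hsplit : RInt f x y = RInt f x x0 + (RInt f x0 y0 + RInt f y0 y)).
        { rewrite <- (RInt_Chasles f x x0 y), <- (RInt_Chasles f x0 y0 y) by (apply Hex; lra).
          reflexivity. }
        assert (0 <= RInt f x x0) by (apply Hpos; lra).
        assert (0 <= RInt f y0 y) by (apply Hpos; lra).
        apply Rabs_def1; lra.
Qed.

Lemma continuous_Gamma_integrand p s : 0 < s ->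
  continuous (fun t => Rpower t (p - 1) * exp (- t)) s.
Proof.
  intros Hs. apply (ex_derive_continuous (K := R_AbsRing) (V := R_NormedModule)).
  eexists. apply (is_derive_mult (fun t => Rpower t (p - 1)) (fun t => exp (- t))).
  - apply is_derive_Rpower; auto.
  - auto_derive; auto.
  - intros; apply Rmult_comm.
Qed.

Lemma ex_RInt_Gamma_integrand p u v : 0 < u <= v ->
  ex_RInt (fun s => Rpower s (p - 1) * exp (- s)) u v.
Proof.
  intros Huv. apply (ex_RInt_continuous (V := R_CompleteNormedModule)).
  rewrite Rmin_left, Rmax_right by lra. intros; apply continuous_Gamma_integrand; lra.
Qed.

Lemma RInt_Gamma_integrand_le_head p x : 0 < p -> 0 < x < 1 ->
  RInt (fun s => Rpower s (p - 1) * exp (- s)) x 1 <= / p.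
Proof.
  intros Hp Hx.
  assert (Hi : is_RInt (fun s => Rpower s (p - 1)) x 1 (Rpower 1 p / p - Rpower x p / p)).
  { apply (is_RInt_derive (V := R_CompleteNormedModule) (fun s => Rpower s p / p));
      rewrite Rmin_left, Rmax_right by lra; intros s Hs.
    - apply (is_derive_ext (fun s => / p * Rpower s p)); [intros; apply Rmult_comm |].
      replace (Rpower s (p - 1)) with (/ p * (p * Rpower s (p - 1))) by (field; lra).
      apply is_derive_scal, is_derive_Rpower. lra.
    - apply (ex_derive_continuous (K := R_AbsRing) (V := R_NormedModule) (fun s => Rpower s (p - 1))).
      eexists; apply is_derive_Rpower; lra. }
  apply Rle_trans with (RInt (fun s => Rpower s (p - 1)) x 1).
  - apply RInt_le; [lra | apply ex_RInt_Gamma_integrand; lra | eexists; eauto |].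
    intros s Hs. rewrite <- (Rmult_1_r (Rpower s (p - 1))) at 2.
    apply Rmult_le_compat_l; [left; apply Rpower_gt_0 |].
    rewrite <- exp_0. left; apply exp_increasing; lra.
  - rewrite (is_RInt_unique _ _ _ _ Hi), Rpower_1_l.
    assert (0 < Rpower x p / p) by (apply Rdiv_lt_0_compat; [apply Rpower_gt_0 | lra]).
    unfold Rdiv in *. lra.
Qed.

Lemma RInt_Gamma_integrand_le_tail p y : p < 1 -> 1 < y ->
  RInt (fun s => Rpower s (p - 1) * exp (- s)) 1 y <= 1.
Proof.
  intros Hp Hy.
  assert (Hi : is_RInt (fun s => exp (- s)) 1 y (- exp (- y) - - exp (- 1))).
  { apply (is_RInt_derive (V := R_CompleteNormedModule) (fun s => - exp (- s))).
    - intros s Hs. auto_derive; auto. ring.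
    - intros s Hs. apply (ex_derive_continuous (K := R_AbsRing) (V := R_NormedModule) (fun s => exp (- s))).
      auto_derive; auto. }
  apply Rle_trans with (RInt (fun s => exp (- s)) 1 y).
  - apply RInt_le; [lra | apply ex_RInt_Gamma_integrand; lra | eexists; eauto |].
    intros s Hs. rewrite <- (Rmult_1_l (exp (- s))) at 2.
    apply Rmult_le_compat_r; [left; apply exp_pos |].
    rewrite <- (Rpower_1_l (p - 1)) at 2.
    apply Rpower_antitone; lra.
  - rewrite (is_RInt_unique _ _ _ _ Hi).
    assert (exp (- 1) <= 1) by (rewrite <- exp_0; left; apply exp_increasing; lra).
    assert (0 < exp (- y)) by apply exp_pos.
    change (- exp (- y) - - exp (- 1) <= 1). lra.
Qed.

Lemma Gamma_pos p : 0 < p < 1 -> 0 < Gamma p.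
Proof.
  intros Hp. set (g := fun t => Rpower t (p - 1) * exp (- t)).
  destruct (is_RInt_gen_nonneg_bounded g 0 1 (/ p + 1)) as (l & Hl & Hle); [lra | ..].
  - intros; apply continuous_Gamma_integrand; auto.
  - intros x Hx. unfold g. apply Rmult_le_pos; left; [apply Rpower_gt_0 | apply exp_pos].
  - intros x y Hx Hy. unfold g.
    rewrite <- (RInt_Chasles _ x 1 y) by (apply ex_RInt_Gamma_integrand; lra).
    assert (H1 := RInt_Gamma_integrand_le_head p x ltac:(lra) Hx).
    assert (H2 := RInt_Gamma_integrand_le_tail p y ltac:(lra) Hy).
    change plus with Rplus. lra.
  - unfold Gamma. fold g. rewrite (is_RInt_gen_unique g l Hl).
    apply Rlt_le_trans with (RInt g (/ 2) 2); [| apply Hle; lra].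
    apply RInt_gt_0; [lra | |].
    + intros x Hx. apply Rmult_lt_0_compat; [apply Rpower_gt_0 | apply exp_pos].
    + intros x Hx. apply continuous_Gamma_integrand. lra.
Qed.

Lemma L1_kernel_ext N s s' :
  (forall n k, (k <= n < N)%nat -> s n k = s' n k) -> L1_kernel N s -> L1_kernel N s'.
Proof.
  intros E [H1 [H2 [H3 H4]]]. repeat split.
  - intros n k Hk. rewrite <- E by lia. auto.
  - intros n n' k Hk Hn. rewrite <- !E by lia. auto.
  - intros n k Hk. rewrite <- !E by lia. auto.
  - intros n n' k Hk Hn. rewrite <- !E by lia. auto.
Qed.

Lemma L1_kernel_scale N s c : 0 <= c -> L1_kernel N s -> L1_kernel N (fun n k => s n k * c).
Proof.
  intros Hc [H1 [H2 [H3 H4]]]. repeat split.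
  - intros. apply Rmult_le_pos; auto.
  - intros. apply Rmult_le_compat_r; auto.
  - intros. apply Rmult_le_compat_r; auto.
  - intros. rewrite <- !Rmult_minus_distr_r. apply Rmult_le_compat_r; auto.
Qed.

Lemma increasing_le (t : nat -> R) N : (forall k, (k < N)%nat -> t k < t (S k)) ->
  forall i j, (i <= j <= N)%nat -> t i <= t j.
Proof.
  intros Ht i j Hij. induction j as [|j IH].
  - replace i with 0%nat by lia. lra.
  - destruct (Nat.eq_dec i (S j)) as [-> | Hne]; [lra |].
    assert (t i <= t j) by (apply IH; lia).
    assert (t j < t (S j)) by (apply Ht; lia). lra.
Qed.

Lemma L1_kernel_divdiff_pow_pos p (t : nat -> R) N : 0 < p < 1 ->
  (forall k, (k < N)%nat -> t k < t (S k)) ->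
  L1_kernel N (fun n k => divdiff (pow_pos p) (t (S n) - t (S k)) (t (S n) - t k)).
Proof.
  intros Hp Ht. assert (Hle := increasing_le t N Ht).
  assert (HW : forall x, 0 < x -> is_derive (pow_pos p) x (dpow_pos p x))
    by (intros; apply is_derive_pow_pos; auto).
  assert (HWc : forall x, 0 <= x -> continuous (pow_pos p) x)
    by (intros; apply continuous_pow_pos; lra).
  assert (HdW : forall x y, 0 < x -> x <= y -> dpow_pos p y <= dpow_pos p x)
    by (intros; apply dpow_pos_antitone; auto).
  assert (HdWc : forall u v w, 0 < u -> u < v < w ->
            divdiff (dpow_pos p) u v <= divdiff (dpow_pos p) v w)
    by (intros; apply dpow_pos_convex; auto).
  assert (Hshift : forall n n' k, t (S n') - t k = t (S n) - t k + (t (S n') - t (S n)))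
    by (intros; ring).
  repeat split.
  - intros n k Hk. left. apply divdiff_pow_pos_pos; [lra | |].
    + assert (t (S k) <= t (S n)) by (apply Hle; lia). lra.
    + assert (t k < t (S k)) by (apply Ht; lia). lra.
  - intros n n' k Hk Hn. rewrite (Hshift n n' k), (Hshift n n' (S k)).
    apply (divdiff_shift_le _ (dpow_pos p) 0); auto.
    + assert (t (S k) <= t (S n)) by (apply Hle; lia). lra.
    + assert (t k < t (S k)) by (apply Ht; lia). lra.
    + assert (t (S n) <= t (S n')) by (apply Hle; lia). lra.
  - intros n k Hk. apply (divdiff_antitone _ (dpow_pos p) 0); auto.
    + assert (t (S (S k)) <= t (S n)) by (apply Hle; lia). lra.
    + assert (t (S k) < t (S (S k))) by (apply Ht; lia).
      assert (t k < t (S k)) by (apply Ht; lia). lra.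
  - intros n n' k Hk Hn. rewrite (Hshift n n' k), (Hshift n n' (S k)), (Hshift n n' (S (S k))).
    apply (divdiff_shift_sub_le _ (dpow_pos p) 0); auto.
    + assert (t (S (S k)) <= t (S n)) by (apply Hle; lia). lra.
    + assert (t (S k) < t (S (S k))) by (apply Ht; lia).
      assert (t k < t (S k)) by (apply Ht; lia). lra.
    + assert (t (S n) <= t (S n')) by (apply Hle; lia). lra.
Qed.

Lemma L1_kernel_L1coef alpha (t : nat -> R) N : 0 < alpha < 1 ->
  (forall k, (k < N)%nat -> t k < t (S k)) ->
  L1_kernel N (fun n k => L1coef alpha t (S n) (S k)).
Proof.
  intros Ha Ht.
  assert (HG : 0 < Gamma (1 - alpha)) by (apply Gamma_pos; lra).
  apply (L1_kernel_ext N (fun n k => divdiff (pow_pos (1 - alpha)) (t (S n) - t (S k)) (t (S n) - t k)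
                                     * / ((1 - alpha) * Gamma (1 - alpha)))).
  - intros n k Hk. rewrite L1coef_divdiff; replace (S k - 1)%nat with k by lia; auto; try lra.
    + apply Ht; lia.
    + apply (increasing_le t N Ht); lia.
  - apply L1_kernel_scale.
    + left. apply Rinv_0_lt_compat, Rmult_lt_0_compat; lra.
    + apply L1_kernel_divdiff_pow_pos; auto; lra.
Qed.

Lemma sumr_ip_L1_nonneg M h alpha (t : nat -> R) (phi : nat -> grid) n :
  0 < alpha < 1 -> (forall k, (k < n)%nat -> t k < t (S k)) ->
  0 <= sumr n (fun r => ip M h (L1 alpha t phi (S r)) (fun i j => phi (S r) i j - phi r i j)).
Proof.
  intros Ha Ht. unfold ip. rewrite sumr_scal, sumr_gsum.
  apply Rmult_le_pos; [apply pow2_ge_0 |]. apply gsum_nonneg. intros i j _ _.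
  rewrite (sumr_ext n _ (fun r => (phi (S r) i j - phi r i j) *
      sumr (S r) (fun k => L1coef alpha t (S r) (S k) * (phi (S k) i j - phi k i j))))
    by (intros; apply Rmult_comm).
  apply (lower_form_nonneg n), L1_kernel_L1coef; auto.
Qed.

Theorem mainTheorem6
  (L m eps alpha kappa : R) (M N : nat)
  (F f : R -> R) (beta : R)
  (V : R -> R) (K1 K2 : R)
  (t : nat -> R) (phi hphi : nat -> grid) (Rs : nat -> R) :
  0 < L -> (0 < M)%nat -> 0 < m -> 0 < eps -> 0 < alpha < 1 -> 0 <= kappa ->
  (* nonlinearity: double-well or Flory-Huggins *)
  ((F = F_dw /\ f = f_dw /\ beta = 1) \/
   (exists theta thetac, 0 < theta < thetac /\
      F = F_fh theta thetac /\ f = f_fh theta thetac /\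
      0 < beta < 1 /\ f beta = 0)) ->
  V_assumptions V K1 K2 ->
  (* time grid *)
  t 0%nat = 0 -> (forall k, (k < N)%nat -> t k < t (S k)) ->
  (* hypotheses of the theorem *)
  (forall x, - beta <= x <= beta -> Rabs (Derive f x) <= kappa) ->
  in_Vbeta M beta (phi 0%nat) ->
  (1 <= N)%nat ->
  tau t 1 < Rpower (kappa * m * Gamma (2 - alpha)) (- / alpha) ->
  (* the L1-sESAV scheme, with h = L / M *)
  let h := L / INR M in
  (* first step predictor *)
  in_Vbeta M beta (hphi 1%nat) ->
  (forall i j, (i < M)%nat -> (j < M)%nat ->
     L1coef alpha t 1 1 * (hphi 1%nat i j - phi 0%nat i j)
     = m * (eps ^ 2 * lap_h M h (hphi 1%nat) i j + f (hphi 1%nat i j))) ->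
  (* predictor for n >= 2 *)
  (forall n i j, (2 <= n <= N)%nat -> (i < M)%nat -> (j < M)%nat ->
     hphi n i j = clip beta ((1 + ratio t n) * phi (n - 1)%nat i j
                             - ratio t n * phi (n - 2)%nat i j)) ->
  (* main step *)
  (forall n i j, (1 <= n <= N)%nat -> (i < M)%nat -> (j < M)%nat ->
     let Vn := V (g_h M h F (hphi n) (Rs (n - 1)%nat)) in
     L1 alpha t phi n i j
     = m * (eps ^ 2 * lap_h M h (phi n) i j + Vn * f (hphi n i j)
            - kappa * Vn * (phi n i j - hphi n i j))) ->
  (forall n, (1 <= n <= N)%nat ->
     let Vn := V (g_h M h F (hphi n) (Rs (n - 1)%nat)) in
     (Rs n - Rs (n - 1)%nat) / tau t n
     = Vn * ip M h (fun i j => - f (hphi n i j) + kappa * (phi n i j - hphi n i j))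
                   (fun i j => (phi n i j - phi (n - 1)%nat i j) / tau t n)) ->
  forall n, (1 <= n <= N)%nat ->
    Eh M h eps (phi n) (Rs n) <= Eh M h eps (phi 0%nat) (Rs 0%nat).
Proof.
  (* Besides the scheme equations, only the monotonicity of [t] and the signs of [L],
     [M], [m], [alpha] are used: the other hypotheses serve solvability of the scheme. *)
  intros HL HM Hm _ Ha _ _ _ _ Ht _ _ _ _ h _ _ _ Hmain HR n Hn.
  assert (Hh : h <> 0).
  { unfold h. assert (0 < INR M) by (apply lt_0_INR; lia).
    apply Rgt_not_eq, Rdiv_lt_0_compat; lra. }
  set (E := fun r => Eh M h eps (phi r) (Rs r)).
  set (X := fun r => ip M h (L1 alpha t phi (S r)) (fun i j => phi (S r) i j - phi r i j)).
  assert (Hdecay : E n - E 0%nat <= sumr n (fun r => - / m * X r)).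
  { apply sumr_telescope_le. intros r Hr.
    assert (Htau : tau t (S r) <> 0).
    { unfold tau. replace (S r - 1)%nat with r by lia.
      assert (t r < t (S r)) by (apply Ht; lia). lra. }
    pose proof (Hmain (S r)) as Hmain_r. pose proof (HR (S r) ltac:(lia)) as HR_r.
    replace (S r - 1)%nat with r in Hmain_r, HR_r by lia.
    replace (- / m * X r) with (- X r / m) by (field; lra).
    apply (Eh_step_le M h eps m kappa (L1 alpha t phi (S r)) (phi (S r)) (phi r)
             (fun i j => f (hphi (S r) i j)) (hphi (S r))
             (V (g_h M h F (hphi (S r)) (Rs r))) (Rs (S r)) (Rs r) (tau t (S r))); auto.
    intros i j Hi Hj. apply Hmain_r; auto; lia. }
  assert (HX : 0 <= sumr n X).
  { apply sumr_ip_L1_nonneg; auto. intros; apply Ht; lia. }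
  rewrite sumr_scal in Hdecay.
  assert (0 <= / m * sumr n X) by (apply Rmult_le_pos; [left; apply Rinv_0_lt_compat |]; lra).
  unfold E in Hdecay. lra.
Qed.
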